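(* Let $\mathbf{L}$ be an intermediate propositional logic and $\mathbf{QL}$ a first-order extension of $\mathbf{L}$ that is preserved under shadow. Then $\varepsilon\tau^+(\mathbf{QL})$ is conservative over $\mathbf{L}$ for propositional formulas: every propositional formula provable in $\varepsilon\tau^+(\mathbf{QL})$ belongs to $\mathbf{L}$.
   Context: An intermediate propositional logic is a set of propositional formulas containing intuitionistic propositional logic, contained in classical propositional logic, closed under modus ponens and substitution. Propositional variables are regarded as 0-ary predicate symbols of the first-order language. $\varepsilon\tau$-terms: for any formula $A(x)$, $\varepsilon x\,A(x)$ and $\tau x\,A(x)$ are terms. Critical formulas: $A(t)\to A(\varepsilon x\,A(x))$ and $A(\tau x\,A(x))\to A(t)$. $\varepsilon\tau^+(\mathbf{QL})$ is the full first-order language (with quantifiers) extended by $\varepsilon\tau$-terms, provability being derivability in $\mathbf{QL}$ (its axioms, modus ponens and quantifier rules) from critical formulas. Shadow: $P(t_1,\dots,t_n)^s=X_P$ (a propositional variable depending only on $P$), $(t_1=t_2)^s=\top$ (a theorem of $\mathbf{L}$), $^s$ commutes with $\land,\lor,\to,\lnot$, and $(\exists x\,A(x))^s=(\forall x\,A(x))^s=A(x)^s$. A first-order extension $\mathbf{QL}$ of $\mathbf{L}$ is preserved under shadow if (1) $\vdash_{\mathbf{L}}A^s$ for every quantifier axiom $A$ of $\mathbf{QL}$, and (2) whenever $A_1,\dots,A_n\vdash_{\mathbf{QL}}B$ is a rule of inference of $\mathbf{QL}$, $A_1^s,\dots,A_n^s\vdash_{\mathbf{L}}B^s$. *)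

From Stdlib Require Import List.
Import ListNotations.
Set Implicit Arguments.

Inductive pform : Type :=
| PVar : nat -> pform
| PBot : pform
| PAnd : pform -> pform -> pform
| POr  : pform -> pform -> pform
| PImp : pform -> pform -> pform
| PNot : pform -> pform.

Definition PTop : pform := PImp PBot PBot.

Fixpoint psubst (s : nat -> pform) (A : pform) : pform :=
  match A with
  | PVar n => s n
  | PBot => PBot
  | PAnd A B => PAnd (psubst s A) (psubst s B)
  | POr A B => POr (psubst s A) (psubst s B)
  | PImp A B => PImp (psubst s A) (psubst s B)
  | PNot A => PNot (psubst s A)
  end.

Inductive IPC : pform -> Prop :=
| ipc_K  : forall A B, IPC (PImp A (PImp B A))
| ipc_S  : forall A B C,
    IPC (PImp (PImp A (PImp B C)) (PImp (PImp A B) (PImp A C)))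
| ipc_andI : forall A B, IPC (PImp A (PImp B (PAnd A B)))
| ipc_andE1 : forall A B, IPC (PImp (PAnd A B) A)
| ipc_andE2 : forall A B, IPC (PImp (PAnd A B) B)
| ipc_orI1 : forall A B, IPC (PImp A (POr A B))
| ipc_orI2 : forall A B, IPC (PImp B (POr A B))
| ipc_orE : forall A B C,
    IPC (PImp (PImp A C) (PImp (PImp B C) (PImp (POr A B) C)))
| ipc_efq : forall A, IPC (PImp PBot A)
| ipc_notE : forall A, IPC (PImp (PNot A) (PImp A PBot))
| ipc_notI : forall A, IPC (PImp (PImp A PBot) (PNot A))
| ipc_mp : forall A B, IPC (PImp A B) -> IPC A -> IPC B.

Fixpoint peval (v : nat -> bool) (A : pform) : bool :=
  match A with
  | PVar n => v n
  | PBot => false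
  | PAnd A B => andb (peval v A) (peval v B)
  | POr A B => orb (peval v A) (peval v B)
  | PImp A B => implb (peval v A) (peval v B)
  | PNot A => negb (peval v A)
  end.

Definition CPC (A : pform) : Prop := forall v, peval v A = true.

Definition intermediate_logic (L : pform -> Prop) : Prop :=
  (forall A, IPC A -> L A) /\
  (forall A, L A -> CPC A) /\
  (forall A B, L (PImp A B) -> L A -> L B) /\
  (forall s A, L A -> L (psubst s A)).

Inductive LDeriv (L : pform -> Prop) (Gamma : list pform) : pform -> Prop :=
| ld_thm : forall A, L A -> LDeriv L Gamma A
| ld_hyp : forall A, In A Gamma -> LDeriv L Gamma A
| ld_mp  : forall A B, LDeriv L Gamma (PImp A B) -> LDeriv L Gamma A ->
           LDeriv L Gamma B.

(* de Bruijn indices: TEps A / TTau A / FAll A / FEx A bind variable 0 of A.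
   Function and predicate symbols are named by nat; propositional variables
   are the 0-ary predicate symbols (FPred n []). *)
Inductive term : Type :=
| TVar : nat -> term
| TFun : nat -> list term -> term
| TEps : form -> term
| TTau : form -> term
with form : Type :=
| FPred : nat -> list term -> form
| FEq : term -> term -> form
| FBot : form
| FAnd : form -> form -> form
| FOr  : form -> form -> form
| FImp : form -> form -> form
| FNot : form -> form
| FAll : form -> form
| FEx  : form -> form.

Definition upren (r : nat -> nat) (n : nat) : nat :=
  match n with 0 => 0 | S k => S (r k) end.

Fixpoint rename_term (r : nat -> nat) (t : term) : term :=
  match t with
  | TVar n => TVar (r n)
  | TFun f ts => TFun f (map (rename_term r) ts)
  | TEps A => TEps (rename_form (upren r) A)
  | TTau A => TTau (rename_form (upren r) A)
  end
with rename_form (r : nat -> nat) (A : form) : form :=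
  match A with
  | FPred P ts => FPred P (map (rename_term r) ts)
  | FEq t u => FEq (rename_term r t) (rename_term r u)
  | FBot => FBot
  | FAnd A B => FAnd (rename_form r A) (rename_form r B)
  | FOr A B => FOr (rename_form r A) (rename_form r B)
  | FImp A B => FImp (rename_form r A) (rename_form r B)
  | FNot A => FNot (rename_form r A)
  | FAll A => FAll (rename_form (upren r) A)
  | FEx A => FEx (rename_form (upren r) A)
  end.

Definition upsub (s : nat -> term) (n : nat) : term :=
  match n with 0 => TVar 0 | S k => rename_term S (s k) end.

Fixpoint subst_term (s : nat -> term) (t : term) : term :=
  match t with
  | TVar n => s n
  | TFun f ts => TFun f (map (subst_term s) ts)
  | TEps A => TEps (subst_form (upsub s) A)
  | TTau A => TTau (subst_form (upsub s) A)
  end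
with subst_form (s : nat -> term) (A : form) : form :=
  match A with
  | FPred P ts => FPred P (map (subst_term s) ts)
  | FEq t u => FEq (subst_term s t) (subst_term s u)
  | FBot => FBot
  | FAnd A B => FAnd (subst_form s A) (subst_form s B)
  | FOr A B => FOr (subst_form s A) (subst_form s B)
  | FImp A B => FImp (subst_form s A) (subst_form s B)
  | FNot A => FNot (subst_form s A)
  | FAll A => FAll (subst_form (upsub s) A)
  | FEx A => FEx (subst_form (upsub s) A)
  end.

Definition inst (A : form) (t : term) : form :=
  subst_form (fun n => match n with 0 => t | S k => TVar k end) A.

Inductive critical : form -> Prop :=
| crit_eps : forall A t, critical (FImp (inst A t) (inst A (TEps A)))
| crit_tau : forall A t, critical (FImp (inst A (TTau A)) (inst A t)).

Fixpoint embed (A : pform) : form :=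
  match A with
  | PVar n => FPred n []
  | PBot => FBot
  | PAnd A B => FAnd (embed A) (embed B)
  | POr A B => FOr (embed A) (embed B)
  | PImp A B => FImp (embed A) (embed B)
  | PNot A => FNot (embed A)
  end.

Fixpoint finst (s : nat -> form) (A : pform) : form :=
  match A with
  | PVar n => s n
  | PBot => FBot
  | PAnd A B => FAnd (finst s A) (finst s B)
  | POr A B => FOr (finst s A) (finst s B)
  | PImp A B => FImp (finst s A) (finst s B)
  | PNot A => FNot (finst s A)
  end.

Fixpoint shadow (A : form) : pform :=
  match A with
  | FPred P _ => PVar P
  | FEq _ _ => PTop
  | FBot => PBot
  | FAnd A B => PAnd (shadow A) (shadow B)
  | FOr A B => POr (shadow A) (shadow B)
  | FImp A B => PImp (shadow A) (shadow B)
  | FNot A => PNot (shadow A)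
  | FAll A => shadow A
  | FEx A => shadow A
  end.

(* A first-order extension QL of L is given by its quantifier axioms QAx and
   its (further) rules of inference QRule (premises, conclusion), stated over
   the full first-order language extended with epsilon-tau terms; besides
   these, QL has all first-order substitution instances of theorems of L as
   axioms and modus ponens as a rule. *)
Definition preserved_under_shadow (L : pform -> Prop)
  (QAx : form -> Prop) (QRule : list form -> form -> Prop) : Prop :=
  (forall A, QAx A -> L (shadow A)) /\
  (forall prem B, QRule prem B -> LDeriv L (map shadow prem) (shadow B)).

(* Provability in epsilon-tau^+(QL): derivability in QL from critical formulas *)
Inductive ETProv (L : pform -> Prop) (QAx : form -> Prop)
    (QRule : list form -> form -> Prop) : form -> Prop :=
| et_prop : forall (A : pform) (s : nat -> form), L A -> ETProv L QAx QRule (finst s A)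
| et_qax  : forall A, QAx A -> ETProv L QAx QRule A
| et_crit : forall A, critical A -> ETProv L QAx QRule A
| et_mp   : forall A B, ETProv L QAx QRule (FImp A B) -> ETProv L QAx QRule A ->
            ETProv L QAx QRule B
| et_rule : forall prem B, QRule prem B ->
            (forall A, In A prem -> ETProv L QAx QRule A) ->
            ETProv L QAx QRule B.

(** Shadow maps every derivation of epsilon-tau^+(QL) to a derivation in L.
    Since the shadow forgets all terms and quantifiers, it commutes with term
    substitution; hence both kinds of critical formula have shadow [X -> X],
    substitution instances of theorems of L have as shadows propositional
    substitution instances of those theorems, and the quantifier axioms and
    rules are handled by preservation under shadow.  Finally the shadow of a
    propositional formula is the formula itself. *)

From Stdlib Require Import List.

Lemma shadow_subst_form (s : nat -> term) (A : form) :
  shadow (subst_form s A) = shadow A.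
Proof. revert s; induction A; intros s; simpl; congruence. Qed.

Lemma shadow_inst (A : form) (t : term) : shadow (inst A t) = shadow A.
Proof. apply shadow_subst_form. Qed.

Lemma shadow_finst (s : nat -> form) (A : pform) :
  shadow (finst s A) = psubst (fun n => shadow (s n)) A.
Proof. induction A; simpl; congruence. Qed.

Lemma shadow_embed (A : pform) : shadow (embed A) = A.
Proof. induction A; simpl; congruence. Qed.

Lemma IPC_imp_refl (X : pform) : IPC (PImp X X).
Proof.
  apply (ipc_mp (ipc_mp (ipc_S X (PImp X X) X) (ipc_K X (PImp X X)))).
  apply ipc_K.
Qed.

Lemma shadow_critical (A : form) : critical A -> IPC (shadow A).
Proof.
  intros [B t | B t]; simpl; rewrite !shadow_inst; apply IPC_imp_refl.
Qed.

Section ShadowSoundness.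

Variable L : pform -> Prop.
Hypothesis L_IPC : forall A, IPC A -> L A.
Hypothesis L_mp : forall A B, L (PImp A B) -> L A -> L B.
Hypothesis L_psubst : forall s A, L A -> L (psubst s A).

Lemma LDeriv_sound (Gamma : list pform) (B : pform) :
  LDeriv L Gamma B -> (forall A, In A Gamma -> L A) -> L B.
Proof. intros HB HGamma; induction HB; eauto. Qed.

Variables (QAx : form -> Prop) (QRule : list form -> form -> Prop).
Hypothesis shadow_preserved : preserved_under_shadow L QAx QRule.

(* A Fixpoint rather than [induction]: the premises of [et_rule] occur under
   [In], so the generated induction principle gives no hypothesis for them. *)
Fixpoint ETProv_shadow (B : form) (HB : ETProv L QAx QRule B) {struct HB} :
  L (shadow B).
Proof.
  destruct HB as [A s HA | A HA | A HA | A B HAB HA | prem B Hrule Hprem].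
  - rewrite shadow_finst; apply L_psubst, HA.
  - apply (proj1 shadow_preserved), HA.
  - apply L_IPC, shadow_critical, HA.
  - exact (L_mp _ _ (ETProv_shadow _ HAB) (ETProv_shadow _ HA)).
  - eapply LDeriv_sound; [exact (proj2 shadow_preserved _ _ Hrule) |].
    intros A HA; apply in_map_iff in HA; destruct HA as [C [<- HC]].
    exact (ETProv_shadow C (Hprem C HC)).
Qed.

End ShadowSoundness.

Theorem mainTheorem2 (L : pform -> Prop) (QAx : form -> Prop)
  (QRule : list form -> form -> Prop) :
  intermediate_logic L ->
  preserved_under_shadow L QAx QRule ->
  forall A : pform, ETProv L QAx QRule (embed A) -> L A.
Proof.
  intros [L_IPC [_ [L_mp L_psubst]]] Hshadow A HA.
  rewrite <- shadow_embed.
  exact (ETProv_shadow L L_IPC L_mp L_psubst QAx QRule Hshadow _ HA).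
Qed.
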